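(* Let $g:[0,1]\to\mathbb R$ be defined by $g(p)=\frac{1}{2+p}\bigl(1-\exp(-\frac{2+p}{p}\ln\frac1{1-p})\bigr)$ for $p\in(0,1)$, with $g(0)=\frac12(1-e^{-2})$ and $g(1)=\frac13$ (the limiting values). Then $$\inf_{\mu}\ \max\Bigl\{\int_{[0,1]}g(q)\,d\mu(q),\ \int_{[0,1]}q\,d\mu(q)\Bigr\}\ =\ \frac{3e^2-3}{7e^2-3}\approx0.3934,$$ where the infimum ranges over all probability measures $\mu$ on $[0,1]$. The infimum is attained by the measure that puts mass $\frac{3e^2-3}{7e^2-3}$ on the point $1$ and the remaining mass on the point $0$. *)

From HB Require Import structures.
From mathcomp Require Import all_boot all_order all_algebra.
From mathcomp Require Import all_classical all_reals all_analysis.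
Set Implicit Arguments. Unset Strict Implicit. Unset Printing Implicit Defensive.
Import Order.TTheory GRing.Theory Num.Theory.
Local Open Scope ring_scope.
Local Open Scope classical_set_scope.

(* The function g : [0,1] -> R of the paper, extended by its limiting values
   at 0 and 1 (values outside [0,1] are irrelevant). *)
Definition gfun (R : realType) (p : R) : R :=
  if p == 0 then 2^-1 * (1 - expR (- 2))
  else if p == 1 then 3^-1
  else (2 + p)^-1 * (1 - expR (- ((2 + p) / p * ln ((1 - p)^-1)))).

(* Probability measures on [0,1], viewed as probability measures on R
   (Borel) concentrated on [0,1]. *)
Definition prob01 (R : realType) : set (probability R R) :=
  [set mu | mu `[0, 1] = 1%E].

Definition objective (R : realType) (mu : probability R R) : \bar R :=
  maxe (\int[mu]_(q in `[0%R, 1%R]) (gfun q)%:E)%E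
       (\int[mu]_(q in `[0%R, 1%R]) q%:E)%E.

Definition cstar (R : realType) : R :=
  (3 * expR 2 - 3) / (7 * expR 2 - 3).

From HB Require Import structures.
From mathcomp Require Import all_boot all_order all_algebra.
From mathcomp Require Import all_classical all_reals all_analysis.
From mathcomp Require Import lra ring measurable_realfun.
Import Order.TTheory GRing.Theory Num.Theory.
Local Open Scope ring_scope.
Local Open Scope classical_set_scope.

(* The function g lies above its chord
     chord p = g(0) (1 - p) + g(1) p,   g(0) = (1 - e^-2)/2,  g(1) = 1/3,
   on [0, 1] (lemma chord_le_gfun).  This is a purely real inequality, proved
   from ln (1/(1-p)) >= p + p^2/2 + p^3/3, the polynomial bound
   exp x >= 1 + x + 5x^2/12 + 5x^3/54 for x >= 0, and e^2 <= 15/2.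
   Integrating, int g dmu >= chord m where m = int q dmu(q) is the mean of mu.
   Since g(0) > g(1) the chord is decreasing and meets the identity exactly
   at cstar, so max (chord m, m) >= cstar for every m.

   For the measure cstar dirac_1 + (1 - cstar) dirac_0 (and for any
   probability with these two masses) both integrals are evaluated at the
   end points: int g = chord cstar = cstar and int q = cstar. *)

Section RealEstimates.
Context (R : realType).

(* The cubic Taylor polynomial of ln (1 / (1 - t)) = t + t^2/2 + t^3/3 + ... *)
Definition log_taylor3 (t : R) : R := t + t ^+ 2 / 2 + t ^+ 3 / 3.

Lemma is_derive_log_taylor3_defect (x : R) :
  is_derive x 1 (fun t => (1 - t) * expR (log_taylor3 t))
    (- x ^+ 3 * expR (log_taylor3 x)).
Proof.
have d_taylor : is_derive x 1 log_taylor3 (1 + x + x ^+ 2).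
  apply: is_derive_eq; rewrite /GRing.scale /= ?mulr0 ?oppr0 ?addr0 ?mulr1.
  by field.
have d_exp : is_derive x 1 (expR \o log_taylor3)
    (expR (log_taylor3 x) * (1 + x + x ^+ 2)).
  exact: is_derive1_comp (is_derive_expR _) d_taylor.
have d_lin : is_derive x 1 (fun t : R => 1 - t) (-1).
  by apply: is_derive_eq; rewrite add0r mul1r.
by apply: is_derive_eq (is_deriveM d_lin d_exp) _; rewrite /GRing.scale /=; ring.
Qed.

Lemma log_taylor3_defect_le1 (p : R) : 0 <= p < 1 ->
  (1 - p) * expR (log_taylor3 p) <= 1.
Proof.
move=> /andP[p0 p1].
have at0 : (1 - 0) * expR (log_taylor3 0) = 1 :> R.
  by rewrite /log_taylor3 !expr0n /= !mul0r !addr0 expR0 subr0 mulr1.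
rewrite -[leRHS]at0.
apply: (@ler0_derive1_le_cc _ (fun t => (1 - t) * expR (log_taylor3 t)) 0 p);
  rewrite ?in_itv /= ?lexx ?p0 //.
- move=> x; rewrite in_itv /= => /andP[x0 _].
  rewrite derive1E (@derive_val _ _ _ _ _ _ _ (is_derive_log_taylor3_defect x)).
  by rewrite mulNr oppr_le0 mulr_ge0 ?exprn_ge0 ?expR_ge0 ?ltW.
- apply: derivable_within_continuous => x _.
  exact: (@ex_derive _ _ _ _ _ _ _ (is_derive_log_taylor3_defect x)).
Qed.

Lemma log_taylor3_le_ln (p : R) : 0 <= p < 1 -> log_taylor3 p <= ln (1 - p)^-1.
Proof.
move=> /[dup] /andP[_ p1] /log_taylor3_defect_le1 hle.
have q0 : 0 < 1 - p by rewrite subr_gt0.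
rewrite -ler_expR lnK ?posrE ?invr_gt0 //.
by rewrite -(ler_pM2l q0) mulfV ?gt_eqF.
Qed.

(* A polynomial lower bound for exp on [0, +oo), from exp x >= (1 + x/6)^6. *)
Lemma expR_ge_cubic (x : R) : 0 <= x ->
  1 + x + 5 / 12 * x ^+ 2 + 5 / 54 * x ^+ 3 <= expR x.
Proof.
move=> x0.
have -> : expR x = expR (x / 6) ^+ 6 by rewrite -expRM_natr; congr expR; field.
have h6 : (1 + x / 6) ^+ 6 <= expR (x / 6) ^+ 6.
  by apply: lerXn2r; rewrite ?nnegrE ?expR_ge1Dx //; lra.
apply: le_trans h6; set z := x / 6.
have -> : x = 6 * z by rewrite /z; field.
have z0 : 0 <= z by rewrite /z; lra.
have z2 := mulr_ge0 z0 z0; have z3 := mulr_ge0 z2 z0; have z4 := mulr_ge0 z3 z0.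
have z5 := mulr_ge0 z4 z0; have z6 := mulr_ge0 z5 z0.
rewrite !exprS expr0 !mulr1; nra.
Qed.

(* Rough numerical bounds on e^2, enough to compare g(0) with g(1). *)
Lemma expR2_gt3 : 3 < expR 2 :> R.
Proof. by have := @expR_ge_cubic 2 ltac:(lra); rewrite !exprS expr0 !mulr1; lra. Qed.

(* e^2 <= 15/2: from (3/4) e^s <= 1 with s = log_taylor3 (1/4) and 2 <= 7 s. *)
Lemma expR2_le : expR 2 <= 15 / 2 :> R.
Proof.
have := @log_taylor3_defect_le1 (1 / 4) ltac:(apply/andP; split; lra).
set s := log_taylor3 (1 / 4) => hs.
have s_val : s = 55 / 192 by rewrite /s /log_taylor3; field.
have es : expR s <= 4 / 3 by have := expR_gt0 s; lra.
have -> : expR 2 = expR (2 - 7%:R * s) * expR s ^+ 7.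
  by rewrite -expRM_natl -expRD subrK.
have h1 : expR (2 - 7%:R * s) <= 1 by rewrite expR_le1 s_val; lra.
have h7 : expR s ^+ 7 <= (4 / 3) ^+ 7.
  by apply: lerXn2r; rewrite ?nnegrE ?expR_ge0 //; lra.
have h43 : (4 / 3) ^+ 7 <= 15 / 2 :> R by rewrite !exprS expr0; lra.
have := expR_ge0 (2 - 7%:R * s); have := exprn_ge0 7 (expR_ge0 s); nra.
Qed.

Lemma expRN2_ge : 2 / 15 <= expR (- 2) :> R.
Proof.
have inv2 : expR (- 2) * expR 2 = 1 :> R by rewrite mulrC expRxMexpNx_1.
by have := expR2_le; have := expR_gt0 (- 2 : R); nra.
Qed.

Lemma expRN_quadratic_le (p : R) : 0 <= p <= 1 ->
  expR (- (p + 2 / 3 * p ^+ 2)) <= 1 - 3 / 4 * p.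
Proof.
move=> /andP[p0 p1]; set x := p + 2 / 3 * p ^+ 2.
have x0 : 0 <= x by rewrite /x; have := mulr_ge0 p0 p0; rewrite expr2; lra.
set P := 1 + x + 5 / 12 * x ^+ 2 + 5 / 54 * x ^+ 3.
have P_le : P <= expR x by exact: expR_ge_cubic.
have P_ge : 1 <= P * (1 - 3 / 4 * p).
  rewrite /P /x !exprS expr0 !mulr1.
  have p2 := mulr_ge0 p0 p0; have p3 := mulr_ge0 p2 p0; have p4 := mulr_ge0 p3 p0.
  have p5 := mulr_ge0 p4 p0; have p6 := mulr_ge0 p5 p0; have p7 := mulr_ge0 p6 p0.
  nra.
have eNx : expR (- x) * expR x = 1 by rewrite mulrC expRxMexpNx_1.
have eNx0 := expR_ge0 (- x).
have : expR (- x) * P <= 1 by rewrite -eNx ler_wpM2l.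
have : expR (- x) <= expR (- x) * (P * (1 - 3 / 4 * p)) by rewrite ler_peMr.
nra.
Qed.


Definition g0 : R := 2^-1 * (1 - expR (- 2)).

Lemma gfun0 : gfun (0 : R) = g0.
Proof. by rewrite /gfun eqxx. Qed.

Lemma gfun1 : gfun (1 : R) = 3^-1.
Proof. by rewrite /gfun oner_eq0 eqxx. Qed.

Definition chord (p : R) : R := g0 * (1 - p) + 3^-1 * p.

(* The exponential term of g, estimated through ln (1/(1-p)) >= log_taylor3 p:
   exp (-(2+p)/p * ln (1/(1-p))) <= (1-p) e^-2 exp (-(p + 2p^2/3)). *)
Lemma gfun_exp_term_le (p : R) : 0 < p < 1 ->
  expR (- ((2 + p) / p * ln (1 - p)^-1)) <= (1 - p) * expR (- 2) * (1 - 3 / 4 * p).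
Proof.
move=> /andP[p0 p1]; set L := ln (1 - p)^-1.
have q0 : 0 < 1 - p by rewrite subr_gt0.
have eNL : expR (- L) = 1 - p by rewrite expRN lnK ?invrK // posrE invr_gt0.
have taylor : log_taylor3 p <= L by apply: log_taylor3_le_ln; rewrite ltW.
have split_exp : (2 + p) / p * L = L + 2 / p * L by field; rewrite gt_eqF.
have taylor2 : 2 + (p + 2 / 3 * p ^+ 2) <= 2 / p * L.
  have -> : 2 + (p + 2 / 3 * p ^+ 2) = 2 / p * log_taylor3 p.
    by rewrite /log_taylor3; field; rewrite gt_eqF.
  by rewrite ler_wpM2l // divr_ge0 // ltW.
apply: (@le_trans _ _ (expR (- L) * expR (- 2) * expR (- (p + 2 / 3 * p ^+ 2)))).
  by rewrite -!expRD ler_expR split_exp; lra.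
rewrite eNL ler_wpM2l ?mulr_ge0 ?expR_ge0 ?(ltW q0) //.
by apply: expRN_quadratic_le; rewrite (ltW p0) (ltW p1).
Qed.

Lemma chord_le_gfun (p : R) : 0 <= p <= 1 -> chord p <= gfun p.
Proof.
move=> /andP[p0 p1].
have [->|pn0] := eqVneq p 0; first by rewrite gfun0 /chord subr0 mulr1 mulr0 addr0.
have [->|pn1] := eqVneq p 1; first by rewrite gfun1 /chord subrr mulr0 add0r mulr1.
have p0' : 0 < p by rewrite lt_neqAle eq_sym pn0.
have p1' : p < 1 by rewrite lt_neqAle pn1.
rewrite /gfun (negbTE pn0) (negbTE pn1).
have T_le := @gfun_exp_term_le p ltac:(by apply/andP).
set T := expR _ in T_le; set E := expR (- 2) in T_le.
have E_ge : 2 / 15 <= E by exact: expRN2_ge.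
have key : (2 + p) * chord p <= 1 - (1 - p) * E * (1 - 3 / 4 * p).
  rewrite /chord /g0 -/E.
  have q0 : 0 <= 1 - p by rewrite subr_ge0.
  have e0 : 0 <= E - 2 / 15 by rewrite subr_ge0.
  have := mulr_ge0 (mulr_ge0 p0 q0) e0; nra.
rewrite -(ler_pM2l (_ : 0 < 2 + p)); last lra.
rewrite mulrA mulfV ?mul1r -/T; first lra.
by rewrite gt_eqF //; lra.
Qed.

Lemma g0E : g0 = (expR 2 - 1) / (2 * expR 2).
Proof. by rewrite /g0 expRN; have := expR2_gt3 => h; field; lra. Qed.

Lemma third_lt_g0 : 3^-1 < g0.
Proof.
rewrite g0E; have := expR2_gt3 => h.
by rewrite ltr_pdivlMr; lra.
Qed.

Lemma cstar_gt0 : 0 < cstar R.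
Proof. by rewrite /cstar; have := expR2_gt3 => h; apply: divr_gt0; lra. Qed.

Lemma cstar_lt1 : cstar R < 1.
Proof. by rewrite /cstar; have := expR2_gt3 => h; rewrite ltr_pdivrMr; lra. Qed.

Lemma chord_cstar : chord (cstar R) = cstar R.
Proof. by rewrite /chord g0E /cstar; have := expR2_gt3 => h; field; lra. Qed.

Lemma cstar_le_chord_or_mean (i : R) : (cstar R <= chord i) || (cstar R <= i).
Proof.
apply/orP; have [ci|i_lt] := leP (cstar R) i; [by right | left].
have -> : chord i = cstar R + (cstar R - i) * (g0 - 3^-1).
  by rewrite -{1}chord_cstar /chord; ring.
by rewrite lerDl mulr_ge0 // subr_ge0 ltW // third_lt_g0.
Qed.

(* Measurability of g, needed to integrate it; inversion is measurable as it
   is continuous away from 0. *)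
Lemma measurable_inv : measurable_fun [set: R] (@GRing.inv R).
Proof.
have -> : [set: R] = [set 0] `|` [set x | x != 0].
  by apply/seteqP; split => x //= _; case: (eqVneq x 0) => [->|]; [left|right].
apply/measurable_funU => //; first by apply: open_measurable; exact: open_neq.
split; first exact: measurable_fun_set1.
apply: open_continuous_measurable_fun; first exact: open_neq.
by move=> x; rewrite inE /= => x0; exact: inv_continuous.
Qed.

Lemma measurable_gfun : measurable_fun [set: R] (@gfun R).
Proof.
rewrite /gfun; apply: measurable_fun_ifT; [exact: measurable_fun_eqr | by [] |].
apply: measurable_fun_ifT; [exact: measurable_fun_eqr | by [] |].
apply: measurable_funM.
  by apply: (measurableT_comp measurable_inv); exact: measurable_funD.
apply: measurable_funB => //.
change (measurable_fun setT (expR \o (fun x : R => - ((2 + x) / x * ln (1 - x)^-1)))).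
apply: measurableT_comp; first exact: measurable_expR.
apply: measurableT_comp => //.
apply: measurable_funM; first exact: measurable_funM (measurable_funD _ _) measurable_inv.
change (measurable_fun setT (@ln R \o (fun x : R => (1 - x)^-1))).
apply: measurableT_comp; first exact: measurable_ln.
change (measurable_fun setT (GRing.inv \o (fun x : R => 1 - x))).
exact: measurableT_comp measurable_inv (measurable_funB _ _).
Qed.

End RealEstimates.

Section TwoPointMeasure.
Context (R : realType) (c : R) (c_ge0 : 0 <= c) (c_le1 : c <= 1).

Lemma compl_weight_ge0 : 0 <= 1 - c.
Proof. by rewrite subr_ge0. Qed.

Definition two_point := measure_add (mscale (NngNum c_ge0) (@dirac _ R 1 R))
  (mscale (NngNum compl_weight_ge0) (@dirac _ R 0 R)).
HB.instance Definition _ := Measure.copy two_point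
  (measure_add (mscale (NngNum c_ge0) (@dirac _ R 1 R))
     (mscale (NngNum compl_weight_ge0) (@dirac _ R 0 R))).

Lemma two_pointE (A : set R) :
  two_point A = (c%:E * \d_(1%R : R) A + (1 - c)%:E * \d_(0%R : R) A)%E.
Proof. by rewrite /two_point measure_addE. Qed.

Lemma two_pointT : two_point setT = 1%E.
Proof. by rewrite two_pointE !diracT !mule1 -EFinD addrC subrK. Qed.

HB.instance Definition _ := Measure_isProbability.Build _ _ _ two_point two_pointT.

Lemma two_point1 : two_point [set 1] = c%:E.
Proof.
rewrite two_pointE !diracE mem_set // memNset /=; last by apply/eqP; rewrite eq_sym oner_eq0.
by rewrite mule1 mule0 adde0.
Qed.

Lemma two_point0 : two_point [set 0] = (1 - c)%:E.
Proof.
rewrite two_pointE !diracE (@memNset _ [set 0] 1) ?mem_set //=; last by apply/eqP; rewrite oner_eq0.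
by rewrite mule1 mule0 add0e.
Qed.

Lemma two_point01 : two_point `[0, 1] = 1%E.
Proof.
by rewrite two_pointE !diracE !mem_set /= ?in_itv /= ?lexx ?ler01 // !mule1 -EFinD addrC subrK.
Qed.

End TwoPointMeasure.

Section Integrals.
Local Open Scope ereal_scope.
Context (R : realType) (mu : probability R R).

Lemma integral_set1 (f : R -> R) (a : R) :
  \int[mu]_(x in [set a]) (f x)%:E = (f a)%:E * mu [set a].
Proof.
rewrite (@eq_integral _ _ _ mu [set a] (cst (f a)%:E)) ?integral_cst //.
by move=> x; rewrite inE /= => ->.
Qed.

Lemma itv01_split :
  `[0%R, 1%R] = ([set 0%R] `|` [set 1%R]) `|` (`]0%R, 1%R[ : set R).
Proof.
apply/seteqP; split => x /=; rewrite !in_itv /=.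
  move=> /andP[x0 x1].
  have [->|xn0] := eqVneq x 0%R; first by left; left.
  have [->|xn1] := eqVneq x 1%R; first by left; right.
  by right; rewrite !lt_neqAle eq_sym xn0 xn1 x0 x1.
by case=> [[->|->]|]; rewrite ?lexx ?ler01 // => /andP[/ltW-> /ltW->].
Qed.

Section TwoMasses.
Variable c : R.
Hypotheses (mu1 : mu [set 1%R] = c%:E) (mu0 : mu [set 0%R] = (1 - c)%:E).

Let A0 : set R := [set 0%R].
Let A1 : set R := [set 1%R].
Let B : set R := `]0%R, 1%R[.
Let mA0 : measurable A0. Proof. exact: measurable_set1. Qed.
Let mA1 : measurable A1. Proof. exact: measurable_set1. Qed.
Let mA01 : measurable (A0 `|` A1). Proof. exact: measurableU. Qed.
Let mB : measurable B. Proof. exact: measurable_itv. Qed.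
Let disj01 : [disjoint A0 & A1].
Proof. by apply/disj_setPS => x [/= -> /esym/eqP]; rewrite oner_eq0. Qed.
Let disjB : [disjoint A0 `|` A1 & B].
Proof.
apply/disj_setPS => x [[/= ->|/= ->]].
all: by rewrite /B /= in_itv /= ?ltxx ?andbF.
Qed.

(* The masses at 0 and 1 already exhaust the total mass 1, so ]0, 1[ is null. *)
Lemma two_masses_open01_null : mu B = 0.
Proof.
have muU : mu ((A0 `|` A1) `|` B) = mu A0 + mu A1 + mu B.
  rewrite measureU //; last exact/disj_set2P.
  by rewrite measureU //; exact/disj_set2P.
have := probability_le1 mu (measurableU _ _ mA01 mB).
rewrite muU mu0 mu1; have : 0 <= mu B by exact: measure_ge0.
by case: (mu B) => [b| |] //=; rewrite -!EFinD !lee_fin => b0 b1; congr EFin; lra.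
Qed.

Lemma integral01_two_masses (f : R -> R) : measurable_fun [set: R] f ->
  \int[mu]_(x in `[0%R, 1%R]) (f x)%:E = (f 0 * (1 - c) + f 1 * c)%:E.
Proof.
move=> mf; have mfE (D : set R) : measurable_fun D (EFin \o f).
  by apply/measurable_EFinP; exact: measurable_funTS.
rewrite itv01_split !integral_setU //.
rewrite (null_set_integral mB _ two_masses_open01_null) //.
by rewrite !integral_set1 mu0 mu1 adde0 -!EFinM -EFinD.
Qed.

End TwoMasses.

Lemma objective_two_point :
  mu [set 1%R] = (cstar R)%:E -> mu [set 0%R] = (1 - cstar R)%:E ->
  objective mu = (cstar R)%:E.
Proof.
move=> m1 m0; rewrite /objective.
rewrite (integral01_two_masses _ m1 m0 _ (measurable_gfun R)).
rewrite (integral01_two_masses _ m1 m0 _ (@measurable_id _ _ setT)).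
rewrite gfun0 gfun1 mul0r add0r mul1r.
by have := chord_cstar R; rewrite /chord => ->; rewrite maxxx.
Qed.

Lemma ereal_sum1_fin (a b : \bar R) : 0 <= a -> 0 <= b -> a + b = 1 ->
  exists m : R, a = m%:E /\ b = (1 - m)%:E.
Proof.
case: a => [a| |]; case: b => [b| |] //= _ _ [ab].
by exists a; split => //; congr EFin; lra.
Qed.

Section ConcentratedOn01.
Hypothesis mu01 : mu `[0%R, 1%R] = 1.

Let in01 (x : R) : `[0%R, 1%R] x -> (0 <= x <= 1)%R.
Proof. by rewrite /= in_itv. Qed.

Let id01_ge0 (x : R) : `[0%R, 1%R] x -> 0 <= x%:E.
Proof. by move=> /in01 /andP[x0 _]. Qed.

Let compl01_ge0 (x : R) : `[0%R, 1%R] x -> 0 <= (1 - x)%:E.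
Proof. by move=> /in01 /andP[_ x1]; rewrite lee_fin subr_ge0. Qed.

Let measurable_compl :
  measurable_fun (`[0%R, 1%R] : set R) (fun x : R => (1 - x)%:E).
Proof. by apply/measurable_EFinP; exact: measurable_funB. Qed.

Lemma mean01 : exists m : R,
  \int[mu]_(x in `[0%R, 1%R]) x%:E = m%:E /\
  \int[mu]_(x in `[0%R, 1%R]) (1 - x)%:E = (1 - m)%:E.
Proof.
apply: ereal_sum1_fin; [exact: integral_ge0 | exact: integral_ge0 |].
rewrite -ge0_integralD //.
under eq_integral do rewrite -EFinD addrC subrK.
by rewrite integral_cst // mul1e.
Qed.

Lemma integral01_affine (a b m : R) : (0 <= a)%R -> (0 <= b)%R ->
  \int[mu]_(x in `[0%R, 1%R]) x%:E = m%:E ->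
  \int[mu]_(x in `[0%R, 1%R]) (1 - x)%:E = (1 - m)%:E ->
  \int[mu]_(x in `[0%R, 1%R]) (a * (1 - x) + b * x)%:E = (a * (1 - m) + b * m)%:E.
Proof.
move=> a0 b0 Em E1m.
under eq_integral do rewrite EFinD !EFinM.
rewrite ge0_integralD //.
- by rewrite !ge0_integralZl // Em E1m -!EFinM -EFinD.
- by move=> x /compl01_ge0; exact: mule_ge0.
- exact: measurable_funeM.
- by move=> x /id01_ge0; exact: mule_ge0.
- by apply: measurable_funeM; exact/measurable_EFinP.
Qed.

(* Lower bound: integrating chord <= g gives chord m <= int g, and one of
   chord m, m is at least cstar. *)
Lemma objective_ge_cstar : (cstar R)%:E <= objective mu.
Proof.
have [m [Em E1m]] := mean01.
have g0_ge0 : (0 <= g0 R)%R.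
  by apply: le_trans (ltW (third_lt_g0 R)); rewrite invr_ge0.
have chord_le : (chord R m)%:E <= \int[mu]_(x in `[0%R, 1%R]) (gfun x)%:E.
  rewrite -(integral01_affine _ _ _ g0_ge0 _ Em E1m) ?invr_ge0 //.
  apply: ge0_le_integral => //.
  - move=> x x01; rewrite EFinD !EFinM adde_ge0 // mule_ge0 //.
    + exact: compl01_ge0.
    + exact: id01_ge0.
  - apply/measurable_EFinP; apply: measurable_funD.
      exact: measurable_funM (measurable_funB _ _).
    exact: measurable_funM.
  - by apply/measurable_EFinP; apply: measurable_funTS; exact: measurable_gfun.
  - by move=> x /in01; rewrite lee_fin; exact: chord_le_gfun.
rewrite /objective Em le_max; apply/orP.
case/orP: (cstar_le_chord_or_mean R m) => h; [left | by right; rewrite lee_fin].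
by apply: le_trans chord_le; rewrite lee_fin.
Qed.

End ConcentratedOn01.
End Integrals.

Theorem mainTheorem9 (R : realType) :
  ereal_inf [set objective mu | mu in @prob01 R] = (cstar R)%:E /\
  (exists mu : probability R R,
      mu [set 1] = (cstar R)%:E /\ mu [set 0] = (1 - cstar R)%:E) /\
  (forall mu : probability R R,
      mu [set 1] = (cstar R)%:E -> mu [set 0] = (1 - cstar R)%:E ->
      objective mu = (cstar R)%:E).
Proof.
pose mstar := @two_point R (cstar R) (ltW (cstar_gt0 R)) (ltW (cstar_lt1 R)).

have mstar1 : mstar [set 1] = (cstar R)%:E by exact: two_point1.
have mstar0 : mstar [set 0] = (1 - cstar R)%:E by exact: two_point0.
split; [|split; [by exists mstar | exact: objective_two_point]].
apply/eqP; rewrite eq_le; apply/andP; split.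
- apply: ereal_inf_lbound; exists mstar; first exact: two_point01.
  exact: objective_two_point.
- by apply: le_ereal_inf_tmp => _ [mu mu01 <-]; exact: objective_ge_cstar.
Qed.
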